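(* Let $a,b,g,h>0$ and fix real numbers $x,y$. Consider all pairs $(\theta,\psi)\in\mathbb{R}^2$ such that, with $A=(a\,\mathrm{ch}\,\theta,a\,\mathrm{sh}\,\theta)$ and $B=(g+b\,\mathrm{ch}\,\psi,b\,\mathrm{sh}\,\psi)$, the vector $B-A$ is future-pointing spacelike with $\langle B-A,B-A\rangle=h^2$; for such a pair write $B-A=h(\mathrm{ch}\,\alpha,\mathrm{sh}\,\alpha)$ with $\alpha\in\mathbb{R}$ and define the coupler point $$X(\theta,\psi)=A+x(\mathrm{ch}\,\alpha,\mathrm{sh}\,\alpha)+y(\mathrm{sh}\,\alpha,\mathrm{ch}\,\alpha).$$ Then the coupler curve $\{X(\theta,\psi)\}$ is algebraic of degree six: there is a nonzero real polynomial $P(X,Y)$ of total degree $6$ vanishing at every coupler point.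
   Context: $\mathbb{R}^2$ carries the Lorentzian form $\langle u,v\rangle=u_1v_1-u_2v_2$; a vector $u$ is future-pointing spacelike if $u_1>|u_2|$. $\mathrm{ch},\mathrm{sh}$ are hyperbolic cosine and sine. This is a Minkowskian planar 4R linkage with fixed pivots $O=(0,0)$, $C=(g,0)$, input crank $OA$ of length $a$, output crank $CB$ of length $b$, coupler $AB$ of length $h$; $(x,y)$ are the coordinates of a point rigidly attached to the coupler in the moving Minkowskian frame located at $A$ with first axis along $AB$. *)

From Stdlib Require Import Reals.
From HB Require Import structures.
From mathcomp Require Import all_boot all_algebra.
From mathcomp Require Import Rstruct.
From mathcomp Require Import mpoly.

Set Implicit Arguments.
Unset Strict Implicit.
Unset Printing Implicit Defensive.

Local Open Scope R_scope.

Definition lor (u v : R * R) : R := fst u * fst v - snd u * snd v.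

Definition fut_spacelike (u : R * R) : Prop := fst u > Rabs (snd u).

Definition coupler_point (a b g h x y : R) (P : R * R) : Prop :=
  exists theta psi alpha : R,
    let A := (a * cosh theta, a * sinh theta) in
    let B := (g + b * cosh psi, b * sinh psi) in
    let u := (fst B - fst A, snd B - snd A) in
    fut_spacelike u /\ lor u u = h ^ 2 /\
    u = (h * cosh alpha, h * sinh alpha) /\
    P = (fst A + x * cosh alpha + y * sinh alpha,
         snd A + x * sinh alpha + y * cosh alpha).

Definition eval2 (p : {mpoly R[2]}) (X Y : R) : R :=
  meval (fun i : 'I_2 => if val i == 0%N then X else Y) p.

From Stdlib Require Import Reals.
From mathcomp Require Import all_boot all_order all_algebra.
From mathcomp Require Import Rstruct.
From mathcomp Require Import mpoly.

(* Put e = (ch α, sh α) and f = (sh α, ch α).  The coupler point P = A + x e + y f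
   determines A = P - x e - y f and B - C = P - C - (x - h) e - y f, so each of the
   conditions <A, A> = a^2 and <B - C, B - C> = b^2 becomes an equation
   K = L ch α + M sh α, with K quadratic and L, M affine in P.  Solving the two
   equations by Cramer's rule, U = D ch α and V = D sh α, and ch^2 - sh^2 = 1 gives
   U^2 - V^2 - D^2 = 0: a polynomial in P of degree 6 whose top-degree part is
   -(2h)^2 (X^2 - Y^2)^3. *)

Set Implicit Arguments.
Unset Strict Implicit.
Unset Printing Implicit Defensive.

Section CoshSinh.
Local Open Scope R_scope.

Lemma cosh_sinh_sq (t : R) : (cosh t ^+ 2 - sinh t ^+ 2 = 1)%R.
Proof.
have e : exp t * exp (- t) = 1 by rewrite -exp_plus Rplus_opp_r exp_0.
change (cosh t * cosh t - sinh t * sinh t = 1).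
by rewrite /cosh /sinh -e; field.
Qed.

End CoshSinh.

From mathcomp Require Import ring.

Import Order.TTheory GRing.Theory Num.Theory.
Local Open Scope ring_scope.

Section CouplerCurve.
Variable T : comRingType.

Lemma hyperbola_scale (r c s : T) :
  c ^+ 2 - s ^+ 2 = 1 -> (r * c) ^+ 2 - (r * s) ^+ 2 = r ^+ 2.
Proof. by move=> hcs; rewrite !exprMn -mulrBr hcs mulr1. Qed.

Definition hyperbola_resultant (K1 L1 M1 K2 L2 M2 : T) : T :=
  (K1 * M2 - K2 * M1) ^+ 2 - (L1 * K2 - L2 * K1) ^+ 2 - (L1 * M2 - L2 * M1) ^+ 2.

Lemma hyperbola_resultant_eq0 (c s K1 L1 M1 K2 L2 M2 : T) :
  c ^+ 2 - s ^+ 2 = 1 -> K1 = L1 * c + M1 * s -> K2 = L2 * c + M2 * s ->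
  hyperbola_resultant K1 L1 M1 K2 L2 M2 = 0.
Proof.
move=> hcs -> ->.
have -> : hyperbola_resultant (L1 * c + M1 * s) L1 M1 (L2 * c + M2 * s) L2 M2
    = (L1 * M2 - L2 * M1) ^+ 2 * (c ^+ 2 - s ^+ 2 - 1).
  by rewrite /hyperbola_resultant; ring.
by rewrite hcs subrr mulr0.
Qed.

Definition circle_K (p q r X Y : T) : T := X * X - Y * Y + p * p - q * q - r * r.
Definition circle_L (p q X Y : T) : T := 2 * (p * X - q * Y).
Definition circle_M (p q X Y : T) : T := 2 * (q * X - p * Y).

Lemma lorentz_circle_linear (c s p q r A1 A2 X Y : T) :
  c ^+ 2 - s ^+ 2 = 1 -> A1 ^+ 2 - A2 ^+ 2 = r ^+ 2 ->
  X = A1 + p * c + q * s -> Y = A2 + p * s + q * c ->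
  circle_K p q r X Y = circle_L p q X Y * c + circle_M p q X Y * s.
Proof.
move=> hcs hA eX eY; apply/eqP; rewrite -subr_eq0.
have -> : circle_K p q r X Y - (circle_L p q X Y * c + circle_M p q X Y * s)
    = A1 ^+ 2 - A2 ^+ 2 - r ^+ 2 - (p * p - q * q) * (c ^+ 2 - s ^+ 2 - 1).
  by rewrite /circle_K /circle_L /circle_M eX eY; ring.
by rewrite hA hcs !subrr mulr0 subr0.
Qed.

Definition coupler_curve (a b g h x y X Y : T) : T :=
  hyperbola_resultant
    (circle_K x y a X Y) (circle_L x y X Y) (circle_M x y X Y)
    (circle_K (x - h) y b (X - g) Y) (circle_L (x - h) y (X - g) Y)
    (circle_M (x - h) y (X - g) Y).

(* (B1, B2) is B - C, the output crank. *)
Lemma coupler_curve_eq0 (a b g h x y c s A1 A2 B1 B2 : T) :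
  c ^+ 2 - s ^+ 2 = 1 -> A1 ^+ 2 - A2 ^+ 2 = a ^+ 2 ->
  B1 ^+ 2 - B2 ^+ 2 = b ^+ 2 -> g + B1 - A1 = h * c -> B2 - A2 = h * s ->
  coupler_curve a b g h x y (A1 + x * c + y * s) (A2 + x * s + y * c) = 0.
Proof.
move=> hcs hA hB hc hs.
have hX : A1 + x * c + y * s - g = B1 + (x - h) * c + y * s.
  by rewrite mulrBl -hc; ring.
have hY : A2 + x * s + y * c = B2 + (x - h) * s + y * c.
  by rewrite mulrBl -hs; ring.
apply: (hyperbola_resultant_eq0 hcs).
  exact: lorentz_circle_linear hcs hA erefl erefl.
exact: lorentz_circle_linear hcs hB hX hY.
Qed.

(* With Q = X^2 - Y^2, the Cramer numerators are U = Q u1 + u0 and V = Q v1 + v0,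
   and u1^2 - v1^2 = -(2h)^2 Q + w; hence U^2 - V^2 - D^2 is -(2h)^2 Q^3 plus
   the following expression, of degree at most 5. *)
Definition coupler_curve_low (a b g h x y X Y : T) : T :=
  let Q := X * X - Y * Y in
  let L1 := circle_L x y X Y in let M1 := circle_M x y X Y in
  let L2 := circle_L (x - h) y (X - g) Y in let M2 := circle_M (x - h) y (X - g) Y in
  let k1 := x * x - y * y - a * a in
  let k2 := g * g - 2 * g * X + (x - h) * (x - h) - y * y - b * b in
  let u1 := 2 * (h * Y - y * g) in let v1 := 2 * (h * X + (x - h) * g) in
  let u0 := k1 * M2 - k2 * M1 in let v0 := L1 * k2 - L2 * k1 in
  let w := 2 * 2 * h * (- (2 * y * g * Y) - 2 * (x - h) * g * X)
           + 2 * 2 * (y * g) * (y * g) - 2 * 2 * ((x - h) * g) * ((x - h) * g) in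
  Q * Q * w + 2 * Q * (u1 * u0 - v1 * v0) + u0 * u0 - v0 * v0
  - (L1 * M2 - L2 * M1) * (L1 * M2 - L2 * M1).

Lemma coupler_curve_split (a b g h x y X Y : T) :
  coupler_curve a b g h x y X Y
  = - (2 * h) ^+ 2 * (X * X - Y * Y) ^+ 3 + coupler_curve_low a b g h x y X Y.
Proof.
rewrite /coupler_curve /coupler_curve_low /hyperbola_resultant.
by rewrite /circle_K /circle_L /circle_M /=; ring.
Qed.

End CouplerCurve.

Lemma coupler_curve_rmorph (T T' : comRingType) (f : {rmorphism T -> T'})
    (a b g h x y X Y : T) :
  f (coupler_curve a b g h x y X Y)
  = coupler_curve (f a) (f b) (f g) (f h) (f x) (f y) (f X) (f Y).
Proof.
rewrite /coupler_curve /hyperbola_resultant /circle_K /circle_L /circle_M.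
by rewrite !(rmorphB, rmorphD, rmorphM, rmorphXn, rmorph1).
Qed.

Section MsizeBounds.
Variables (R : idomainType) (n : nat).
Implicit Types (p q : {mpoly R[n]}) (c : R).

Lemma msizeC_le c : (msize (c%:MP : {mpoly R[n]}) <= 1)%N.
Proof. by rewrite msizeC leq_b1. Qed.

Lemma msize_natr_le k : (msize (k%:R : {mpoly R[n]}) <= 1)%N.
Proof. by rewrite -mpolyC_nat msizeC_le. Qed.

Lemma msizeXU_le i : (msize ('X_i : {mpoly R[n]}) <= 2)%N.
Proof. by rewrite msizeX mdeg1. Qed.

Lemma msizeD_leq p q m k :
  (msize p <= m -> msize q <= k -> msize (p + q) <= maxn m k)%N.
Proof.
move=> hp hq; rewrite (leq_trans (msizeD_le p q)) //.
by rewrite geq_max !leq_max hp hq orbT.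
Qed.

Lemma msizeM_leq p q m k :
  (msize p <= m -> msize q <= k -> msize (p * q) <= (m + k).-1)%N.
Proof.
move=> hp hq.
have [->|p0] := eqVneq p 0; first by rewrite mul0r msize0.
have [->|q0] := eqVneq q 0; first by rewrite mulr0 msize0.
by rewrite msizeM // -!subn1 leq_sub2r // leq_add.
Qed.

Lemma msize_addl p q : (msize q < msize p)%N -> msize (p + q) = msize p.
Proof.
move=> hqp; apply/eqP; rewrite eqn_leq; apply/andP; split.
  by rewrite (leq_trans (msizeD_le p q)) // geq_max leqnn ltnW.
have := msizeD_le (p + q) (- q).
by rewrite addrK msizeN leq_max [(msize p <= msize q)%N]leqNgt hqp orbF.
Qed.

Lemma msize_exp p k : p != 0 -> msize (p ^+ k) = ((msize p).-1 * k).+1.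
Proof.
move=> p0; have [m hm] : exists m, msize p = m.+1.
  by exists (msize p).-1; rewrite prednK // lt0n msize_poly_eq0.
elim: k => [|k IHk]; first by rewrite expr0 msize1 muln0.
by rewrite exprS msizeM ?expf_neq0 // IHk hm /= mulnS addnS.
Qed.

Lemma msize_nonconst p (v w : 'I_n -> R) :
  (msize p <= 2)%N -> p.@[v] != p.@[w] -> msize p = 2.
Proof.
move=> hp hvw; apply/eqP; rewrite eqn_leq hp ltnNge.
by apply: contra hvw => /msize1_polyC ->; rewrite !mevalC.
Qed.

End MsizeBounds.

Ltac msize_bound :=
  lazymatch goal with
  | |- is_true (leq (mmeasure _ (_ + _)) _) => eapply msizeD_leq; msize_bound
  | |- is_true (leq (mmeasure _ (_ * _)) _) => eapply msizeM_leq; msize_bound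
  | |- is_true (leq (mmeasure _ (- _)) _) => rewrite msizeN; msize_bound
  | |- is_true (leq (mmeasure _ (_ %:MP)) _) => exact: msizeC_le
  | |- is_true (leq (mmeasure _ 'X_ _) _) => exact: msizeXU_le
  | |- is_true (leq (mmeasure _ (_ %:R)) _) => exact: msize_natr_le
  end.

Ltac msize_le := eapply leq_trans; [msize_bound | by []].

Lemma msize_lorentz_form (R : idomainType) (n : nat) (i j : 'I_n) :
  i != j -> msize ('X_i * 'X_i - 'X_j * 'X_j : {mpoly R[n]}) = 3.
Proof.
move=> ij; pose v k : R := (k == i)%:R.
have vi : v i = 1 by rewrite /v eqxx.
have vj : v j = 0 by rewrite /v eq_sym (negbTE ij).
have linear (q : {mpoly R[n]}) :
    (msize q <= 2)%N -> q.@[v] = 1 -> q.@[fun=> 0] = 0 -> q != 0 /\ msize q = 2.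
  move=> hq q1 q0; have sq : msize q = 2.
    by apply: (msize_nonconst (v := v) (w := fun=> 0) hq); rewrite q1 q0 oner_neq0.
  by rewrite -msize_poly_eq0 sq.
have [nzB szB] :
    ('X_i - 'X_j : {mpoly R[n]}) != 0 /\ msize ('X_i - 'X_j : {mpoly R[n]}) = 2.
  by apply: linear; [msize_le | rewrite mevalB !mevalXU vi vj subr0
                              | rewrite mevalB !mevalXU subrr].
have [nzD szD] :
    ('X_i + 'X_j : {mpoly R[n]}) != 0 /\ msize ('X_i + 'X_j : {mpoly R[n]}) = 2.
  by apply: linear; [msize_le | rewrite mevalD !mevalXU vi vj addr0
                              | rewrite mevalD !mevalXU addr0].
have -> : 'X_i * 'X_i - 'X_j * 'X_j = ('X_i - 'X_j) * ('X_i + 'X_j) :> {mpoly R[n]}.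
  by ring.
by rewrite msizeM // szB szD.
Qed.

Definition coupler_mpoly (R : comRingType) (a b g h x y : R) : {mpoly R[2]} :=
  coupler_curve a%:MP b%:MP g%:MP h%:MP x%:MP y%:MP 'X_ord0 'X_ord_max.

Section CouplerDegree.
Variables (R : idomainType) (a b g h x y : R).
Local Notation pX := ('X_ord0 : {mpoly R[2]}).
Local Notation pY := ('X_ord_max : {mpoly R[2]}).

Lemma msize_coupler_low :
  (msize (coupler_curve_low a%:MP b%:MP g%:MP h%:MP x%:MP y%:MP pX pY) <= 6)%N.
Proof. by rewrite /coupler_curve_low /circle_L /circle_M; msize_le. Qed.

Lemma msize_coupler_mpoly : 2 * h != 0 -> msize (coupler_mpoly a b g h x y) = 7.
Proof.
move=> h2; set Q := pX * pX - pY * pY.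
have szQ : msize Q = 3 by apply: msize_lorentz_form.
have szT : msize (- (2 * h%:MP) ^+ 2 * Q ^+ 3) = 7.
  rewrite -[2]mpolyC_nat -mpolyCM -rmorphXn -mpolyCN mul_mpolyC msizeZ.
    by rewrite msize_exp -?msize_poly_eq0 szQ.
  by rewrite oppr_eq0 expf_neq0.
rewrite /coupler_mpoly coupler_curve_split msize_addl szT //.
by rewrite ltnS msize_coupler_low.
Qed.

End CouplerDegree.

Lemma eval2_coupler_mpoly (a b g h x y X Y : R) :
  eval2 (coupler_mpoly a b g h x y) X Y = coupler_curve a b g h x y X Y.
Proof. by rewrite /eval2 /coupler_mpoly coupler_curve_rmorph /= !mevalC !mevalXU. Qed.

Local Close Scope ring_scope.
Local Open Scope R_scope.

Theorem mainTheorem7 (a b g h x y : R) :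
  0 < a -> 0 < b -> 0 < g -> 0 < h ->
  exists p : {mpoly R[2]},
    p != 0%R /\ msize p = 7%N /\
    (forall X Y : R, coupler_point a b g h x y (X, Y) -> eval2 p X Y = 0).
Proof.
move=> _ _ _ /RltP h_gt0; exists (coupler_mpoly a b g h x y).
have szP : msize (coupler_mpoly a b g h x y) = 7%N.
  by apply: msize_coupler_mpoly; rewrite mulf_neq0 ?pnatr_eq0 ?gt_eqF.
split; first by rewrite -msize_poly_eq0 szP.
split=> // X Y [th [ps [al /= [_ [_ [[hc hs] [-> ->]]]]]]].
rewrite eval2_coupler_mpoly.
apply: (coupler_curve_eq0 x y (cosh_sinh_sq al) _ _ hc hs).
  exact: hyperbola_scale (cosh_sinh_sq th).
exact: hyperbola_scale (cosh_sinh_sq ps).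
Qed.
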